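(* Let $p$ be an odd prime. Then $$\Psi^w_{\mathbb{Z}_p}(x)=\frac{2}{p-1}\sum_{d\mid\frac{p-1}{2}}\phi\!\left(\frac{p-1}{2d}\right)\left(\left(1+x^{\frac{p-1}{d}}\right)^{d}-1\right),$$ and hence $$\mathcal{E}^w(\mathbb{Z}_p)=\Psi^w_{\mathbb{Z}_p}(1)=\frac{2}{p-1}\sum_{d\mid\frac{p-1}{2}}\phi\!\left(\frac{p-1}{2d}\right)\left(2^d-1\right).$$
   Context: $\phi$ is Euler's totient function. For a finite group $\mathcal{A}$ with identity $e$, let $G(\mathcal{A})=\{\Omega\subseteq\mathcal{A}:\Omega^{-1}=\Omega,\ \langle\Omega\rangle=\mathcal{A},\ e\notin\Omega\}$. $\mathrm{Aut}(\mathcal{A})$ acts on $G(\mathcal{A})$ by $\alpha\cdot\Omega=\alpha(\Omega)$. For $k\ge1$ let $a^w_k(\mathcal{A})$ be the number of orbits of $\mathrm{Aut}(\mathcal{A})$ on $\{\Omega\in G(\mathcal{A}):|\Omega|=k\}$ (the number of weak equivalence classes of Cayley graphs $C(\mathcal{A},\Omega)$ of degree $k$); $\Psi^w_{\mathcal{A}}(x)=\sum_{k=1}^{|\mathcal{A}|-1}a^w_k(\mathcal{A})x^k$ and $\mathcal{E}^w(\mathcal{A})=\Psi^w_{\mathcal{A}}(1)$. *)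

From HB Require Import structures.
From mathcomp Require Import all_boot all_order all_algebra all_fingroup.
Set Implicit Arguments. Unset Strict Implicit. Unset Printing Implicit Defensive.
Import GRing.Theory.

Section CayleyDefs.
Variable gT : finGroupType.

Definition cayley_sets (A : {group gT}) (k : nat) : {set {set gT}} :=
  [set S : {set gT} | [&& S \subset A, (1 \notin S)%g, (S^-1 == S)%g,
                         (<<S>> == A)%g & #|S| == k]].

Definition aut_orbit (A : {group gT}) (S : {set gT}) : {set {set gT}} :=
  [set (fun x => a x) @: S | a : {perm gT} in Aut A].

Definition a_w (A : {group gT}) (k : nat) : nat :=
  #|[set aut_orbit A S | S in cayley_sets A k]|.

Definition Psi_w (A : {group gT}) : {poly rat} :=
  (\sum_(1 <= k < #|A|) (a_w A k)%:R *: 'X^k)%R.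

Definition E_w (A : {group gT}) : nat := \sum_(1 <= k < #|A|) a_w A k.
End CayleyDefs.

(* Write p - 1 = 2m.  For k > 0, a Cayley set of degree k on a group G of
   order p is just an inversion-closed k-subset of G^# = G :\ 1, since any
   nonempty subset of G^# generates G.  Aut G is cyclic of order 2m,
   generated by some g, and inversion is its involution g^m.  Hence g^i
   fixes a Cayley set S iff S is invariant under <[g^gcd(i,m)]>, a group of
   order 2m/d (d = gcd(i,m)) acting semiregularly on G^#; the invariant
   k-subsets are unions of its d orbits, counted by binom_coef (2m/d) d k.
   Burnside's lemma and the count of i < 2m with gcd(i, m) = d then give
     a^w_k(G) * m = \sum_(d | m) totient (m/d) * binom_coef (2m/d) d k,
   and binom_coef (2m/d) d k is the coefficient of x^k in (1 + x^(2m/d))^d. *)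

From HB Require Import structures.
From mathcomp Require Import all_boot all_order all_algebra all_fingroup.
From mathcomp Require Import all_solvable zify ring.
Set Implicit Arguments. Unset Strict Implicit. Unset Printing Implicit Defensive.

Lemma card_gcd_eq m d : 0 < m -> d %| m ->
  \sum_(0 <= i < m) (gcdn i m == d) = totient (m %/ d).
Proof.
move=> m_gt0 dvd_dm; have d_gt0 : 0 < d := dvdn_gt0 m_gt0 dvd_dm.
set q := m %/ d; have def_m : m = q * d by rewrite divnK.
rewrite {1 2}def_m big_nat_mul totient_count_coprime.
apply: eq_bigr => j _; rewrite big_ltn; last by rewrite ltn_pmul2r.
rewrite -muln_gcdl -[X in _ == X](mul1n d) eqn_pmul2r // coprime_sym /coprime.
rewrite big1_seq => [|i /andP[_]]; first by rewrite /= addn0.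
rewrite mem_index_iota => /andP[lo hi].
case: eqP => [gcd_d|//]; have : d %| i by rewrite -gcd_d dvdn_gcdl.
by case/dvdnP=> c def_i; move: lo hi; rewrite def_i ltn_pmul2r // ltn_pmul2r //; lia.
Qed.

Lemma sum_gcd m (f : nat -> nat) : 0 < m ->
  \sum_(0 <= i < m) f (gcdn i m) = \sum_(d <- divisors m) totient (m %/ d) * f d.
Proof.
move=> m_gt0.
transitivity (\sum_(0 <= i < m) \sum_(d <- divisors m) (gcdn i m == d) * f d).
  apply: eq_bigr => i _; rewrite (bigD1_seq (gcdn i m)) ?divisors_uniq //=; last first.
    by rewrite -dvdn_divisors // dvdn_gcdr.
  rewrite eqxx mul1n big1 ?addn0 // => d; rewrite eq_sym => /negbTE->.
  by rewrite mul0n.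
rewrite exchange_big /=; apply: eq_big_seq => d; rewrite -dvdn_divisors // => dvd_dm.
by rewrite -big_distrl /= card_gcd_eq.
Qed.

(* The same grouping over i < 2m: gcd(i, m) is m-periodic in i. *)
Lemma sum_gcd_double m (f : nat -> nat) : 0 < m ->
  \sum_(i < 2 * m) f (gcdn i m) = 2 * \sum_(d <- divisors m) totient (m %/ d) * f d.
Proof.
move=> m_gt0; rewrite -(big_mkord xpredT (fun i => f (gcdn i m))) mul2n -addnn.
rewrite (@big_cat_nat _ _ _ m) ?leq_addr //=.
have -> : \sum_(m <= i < m + m) f (gcdn i m) = \sum_(0 <= i < m) f (gcdn i m).
  rewrite -{1}(add0n m) big_addn addnK; apply: eq_bigr => i _.
  by rewrite gcdnC gcdnDr gcdnC.
by rewrite sum_gcd // addnn mul2n.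
Qed.

(* binom_coef e d k counts the k-element unions of blocks chosen among d
   blocks of size e; it is also the coefficient of x^k in (1 + x^e)^d. *)
Definition binom_coef (e d k : nat) : nat := if e %| k then 'C(d, k %/ e) else 0.

Section UniformPartition.
Variables (T : finType) (P : {set {set T}}) (X : {set T}) (e : nat).
Hypotheses (partP : partition P X) (cardP : {in P, forall B : {set T}, #|B| = e}).

Lemma blocks_of_cover (Q : {set {set T}}) :
  Q \subset P -> [set B in P | B \subset cover Q] = Q.
Proof.
case/and3P: partP => _ trivP nz_P sQP; apply/setP => B; rewrite inE.
apply/andP/idP => [[PB sBQ] | QB]; last by rewrite (subsetP sQP) ?bigcup_sup.
have /set0Pn[x Bx] : B != set0 by apply: contraNneq nz_P => <-.
have /bigcupP[B' QB' B'x] := subsetP sBQ x Bx.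
by rewrite -(def_pblock trivP PB Bx) (def_pblock trivP (subsetP sQP _ QB') B'x).
Qed.

Lemma card_cover (Q : {set {set T}}) : Q \subset P -> #|cover Q| = #|Q| * e.
Proof.
case/and3P: partP => _ trivP nz_P sQP.
apply: card_uniform_partition => [B QB|]; first by rewrite cardP ?(subsetP sQP).
by rewrite /partition eqxx (trivIsetS sQP trivP) (contra (subsetP sQP _)).
Qed.

Hypothesis e_gt0 : 0 < e.

Lemma card_unions_of_blocks k :
  #|cover @: [set Q : {set {set T}} | (Q \subset P) && (#|cover Q| == k)]| =
  binom_coef e #|P| k.
Proof.
rewrite card_in_imset => [|Q1 Q2]; last first.
  rewrite !inE => /andP[sQ1 _] /andP[sQ2 _] eqQ.
  by rewrite -(blocks_of_cover sQ1) eqQ blocks_of_cover.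
have -> : [set Q : {set {set T}} | (Q \subset P) && (#|cover Q| == k)] =
          [set Q : {set {set T}} | (Q \subset P) && (#|Q| * e == k)].
  by apply/setP => Q; rewrite !inE; have [/card_cover->|] := boolP (Q \subset P).
rewrite /binom_coef; case: ifP => [/divnK {1}<- | not_dvd].
  by rewrite -cards_draws; apply: eq_card => Q; rewrite !inE eqn_pmul2r.
apply/eqP; rewrite cards_eq0; apply/eqP/setP => Q; rewrite !inE.
by apply: contraFF not_dvd => /andP[_ /eqP <-]; rewrite dvdn_mull.
Qed.

End UniformPartition.

Open Scope group_scope.

Section InvariantSubsets.
Variables (aT : finGroupType) (D : {group aT}) (rT : finType) (to : action D rT).
Variables (K : {group aT}) (X : {set rT}).
Hypotheses (sKD : K \subset D) (actsKX : [acts K, on X | to]).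

Local Notation orbits := (orbit to K @: X).

Lemma invariant_subsetsE k :
  [set S : {set rT} | [&& S \subset X, [acts K, on S | to] & #|S| == k]] =
  cover @: [set Q : {set {set rT}} | (Q \subset orbits) && (#|cover Q| == k)].
Proof.
apply/setP => S; rewrite inE; apply/and3P/imsetP => [[sSX actsKS /eqP cardS] | [Q]].
  have sQP : [set B in orbits | B \subset S] \subset orbits.
    by apply/subsetP => B /setIdP[].
  suff def_S : S = cover [set B in orbits | B \subset S].
    by exists [set B in orbits | B \subset S]; rewrite // inE sQP -def_S cardS /=.
  apply/eqP; rewrite eqEsubset; apply/andP; split; last by apply/bigcupsP => B /setIdP[].
  apply/subsetP => x Sx; apply/bigcupP; exists (orbit to K x); last exact: orbit_refl.
  by rewrite inE imset_f ?(subsetP sSX) ?acts_sub_orbit.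
rewrite inE => /andP[sQP cardQ] ->{S}.
have actsB B : B \in Q -> [acts K, on B | to].
  by move/(subsetP sQP)=> /imsetP[x _ ->]; apply: acts_orbit.
split=> //.
  by apply/bigcupsP => B /(subsetP sQP); apply: partitionS (orbit_partition actsKX).
apply: (big_ind (fun S => [acts K, on S | to])) => [|S1 S2|]; [|exact: actsU|exact: actsB].
by apply/subsetP => a Ka; rewrite !inE (subsetP sKD) ?sub0set.
Qed.

Hypothesis regK : {in X, forall x, 'C_K[x | to] = 1}.

(* Under a semiregular action every orbit has #|K| points, so the count of
   invariant subsets is a count of unions of blocks. *)
Lemma card_invariant_subsets k :
  #|[set S : {set rT} | [&& S \subset X, [acts K, on S | to] & #|S| == k]]| =
  binom_coef #|K| (#|X| %/ #|K|) k.
Proof.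
have partP := orbit_partition actsKX.
have cardP : {in orbits, forall B : {set rT}, #|B| = #|K|}.
  by move=> _ /imsetP[x Xx ->]; rewrite card_orbit_in // regK // indexg1.
rewrite invariant_subsetsE (card_unions_of_blocks partP cardP) //.
by rewrite (card_uniform_partition cardP partP) mulnK.
Qed.

End InvariantSubsets.

Lemma mem_expg_gcd (T : finGroupType) (N : {group T}) (h : T) i m : 0 < m ->
  (h ^+ m \in N) && (h ^+ i \in N) = (h ^+ gcdn i m \in N).
Proof.
move=> m_gt0; apply/andP/idP => [[Nm Ni] | Ngcd].
  have [a _ /dvdnP[c def_c]] := Bezoutl i m_gt0.
  have -> : h ^+ gcdn i m = h ^+ (c * m) * (h ^+ (a * i))^-1.
    by rewrite -def_c gcdnC expgD mulgK.
  by rewrite groupM ?groupV // mulnC expgM groupX.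
have mem_mul n : gcdn i m %| n -> h ^+ n \in N.
  by move=> dvd_n; rewrite -(divnK dvd_n) mulnC expgM groupX.
by rewrite !mem_mul ?dvdn_gcdr ?dvdn_gcdl.
Qed.

Lemma sum_cycle (T : finGroupType) (x : T) (F : T -> nat) :
  \sum_(a in <[x]>) F a = \sum_(i < #[x]) F (x ^+ i).
Proof.
have -> : <[x]> = (fun i : 'I_#[x] => x ^+ i) @: [set: 'I_#[x]].
  apply/setP => y; apply/cycleP/imsetP => [[j ->]|[i _ ->]]; last by exists i.
  by exists (Ordinal (ltn_pmod j (order_gt0 x))); rewrite ?inE ?expg_mod_order.
rewrite big_imset /= => [|i j _ _ /eqP]; first by apply: eq_bigl => i; rewrite inE.
by rewrite eq_expg_mod_order !modn_small // => /eqP /val_inj.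
Qed.

Section Automorphisms.
Variables (gT : finGroupType) (G : {group gT}).

Lemma Aut_morphX a x j : a \in Aut G -> x \in G -> a (x ^+ j) = a x ^+ j.
Proof. by move=> Aa Gx; rewrite -(autmE Aa) morphX. Qed.

Lemma Aut_acts_nontrivial : [acts Aut G, on G :\ 1 | 'P].
Proof.
apply/subsetP => a Aa; apply/astabsP => x /=; rewrite !inE.
have [perm_a _] := setIdP Aa; rewrite (perm_closed _ perm_a); congr (~~ _ && _).
have a1 : a 1 = 1 by rewrite -(autmE Aa) morph1.
by rewrite -{1}a1 (inj_eq perm_inj).
Qed.

Section Inversion.
Hypothesis cGG : abelian G.

Lemma invg_morphM : {in G &, {morph (fun x : gT => x^-1) : x y / x * y}}.
Proof. by move=> x y Gx Gy /=; rewrite invMg; apply: (centsP cGG); rewrite groupV. Qed.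

Definition invg_morphism := Morphism invg_morphM.

Lemma injm_invg : 'injm invg_morphism.
Proof. by apply/injmP => x y _ _ /invg_inj. Qed.

Lemma im_invg : invg_morphism @* G = G.
Proof.
apply/(morphim_fixP injm_invg _ (subxx _)).
by apply/subsetP => _ /morphimP[x _ Gx ->]; rewrite /= groupV.
Qed.

Definition inv_aut := aut injm_invg im_invg.

Lemma Aut_inv_aut : inv_aut \in Aut G. Proof. exact: Aut_aut. Qed.

Lemma inv_autE x : x \in G -> inv_aut x = x^-1.
Proof. exact: autE. Qed.

End Inversion.

Hypothesis prG : prime #|G|.

Lemma cycle_prime_nt x : x \in G :\ 1 -> <[x]> = G.
Proof.
rewrite !inE => /andP[nt_x Gx]; apply/eqP; rewrite eqEcard cycle_subG Gx -orderE.
have nt_ox : #[x] != 1%N by rewrite order_eq1.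
by have /(prime_nt_dvdP prG nt_ox) -> := order_dvdG Gx; rewrite leqnn.
Qed.

Lemma Aut_semiregular : {in G :\ 1, forall x, 'C_(Aut G)[x | 'P] = 1}.
Proof.
move=> x Xx; have /setD1P[_ Gx] := Xx.
apply/trivgP/subsetP => a /setIP[Aa /astab1P /=]; rewrite apermE => fix_x.
rewrite inE; apply/eqP/(eq_Aut Aa (group1 _)) => y.
by rewrite -(cycle_prime_nt Xx) => /cycleP[j ->]; rewrite Aut_morphX ?fix_x ?perm1.
Qed.

Hypothesis oddG : odd #|G|.
Let cGG : abelian G := cyclic_abelian (prime_cyclic prG).
Local Notation iota := (inv_aut cGG).
Local Notation X := (G :\ 1).

Lemma order_inv_aut : #[iota] = 2.
Proof.
have /trivgPn[x Gx nt_x] : G != 1%G by rewrite -cardG_gt1 prime_gt1.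
have Xx : x \in X by rewrite !inE nt_x.
have nt_iota : iota != 1.
  apply/eqP => iota1; have : #|G| %| 2.
    rewrite -(cycle_prime_nt Xx) -orderE order_dvdn expgS expg1.
    by rewrite -{1}(perm1 x) -iota1 inv_autE ?mulVg.
  by rewrite dvdn_prime2 // => /eqP G2; move: oddG; rewrite G2.
have nt_o : #[iota] != 1%N by rewrite order_eq1.
apply/(prime_nt_dvdP (isT : prime 2) nt_o); rewrite order_dvdn expgS expg1.
have Aiota := Aut_inv_aut cGG.
apply/eqP/(eq_Aut (groupM Aiota Aiota) (group1 _)) => y Gy.
by rewrite permM !inv_autE ?groupV // invgK perm1.
Qed.

(* For k > 0, a Cayley set of degree k is just an inversion-closed
   k-subset of the nontrivial elements: generation is automatic. *)
Lemma cayley_setsE k S : 0 < k ->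
  (S \in cayley_sets G k) = [&& S \subset X, iota \in 'N(S | 'P) & #|S| == k].
Proof.
move=> k_gt0; rewrite inE; apply/and5P/and3P => [[sSG S'1 invS _ cardS] | [sSX nSi cardS]].
  split=> //; first by apply/subsetP => x Sx; rewrite !inE (subsetP sSG) // andbT;
    apply: contraNneq S'1 => <-.
  apply/astabsP => x; rewrite /= apermE; have [Gx | G'x] := boolP (x \in G).
    by rewrite inv_autE // -{2}(eqP invS) inE.
  by rewrite (out_Aut (Aut_inv_aut cGG)).
have sSG : S \subset G := subset_trans sSX (subD1set G 1).
have /set0Pn[x Sx] : S != set0 by rewrite -card_gt0 (eqP cardS).
split=> //.
- by apply/negP => /(subsetP sSX); rewrite !inE eqxx.
- rewrite eqEcard card_invg leqnn andbT; apply/subsetP => y; rewrite inE => Sy'.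
  have Gy : y \in G by rewrite -groupV (subsetP sSG).
  by rewrite -(astabs_act y nSi) /= apermE inv_autE.
- rewrite eqEsubset gen_subG sSG -(cycle_prime_nt (subsetP sSX x Sx)).
  by rewrite cycle_subG mem_gen.
Qed.

(* Aut G acts on the Cayley sets of each degree, since it commutes with iota. *)
Lemma Aut_acts_cayley_sets k : 0 < k -> [acts Aut G, on cayley_sets G k | 'P^*].
Proof.
move=> k_gt0.
have actsS a S : a \in Aut G -> S \in cayley_sets G k -> 'P^* S a \in cayley_sets G k.
  move=> Aa; rewrite !cayley_setsE // => /and3P[sSX nSi cardS]; apply/and3P; split.
  - apply/subsetP => _ /imsetP[x Sx ->].
    by rewrite (acts_act Aut_acts_nontrivial) ?(subsetP sSX).
  - rewrite -astab1_set astab1_act astab1_set mem_conjg conjgE.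
    have cAA : abelian (Aut G) := Aut_cyclic_abelian (prime_cyclic prG).
    by rewrite (centsP cAA iota) ?groupV ?Aut_inv_aut // invgK mulKVg.
  - by rewrite setactE card_imset //; apply: act_inj.
apply/subsetP => a Aa; apply/astabsP => S; apply/idP/idP; last exact: actsS.
by move/(actsS a^-1); rewrite groupV actK; apply.
Qed.

Local Notation m := (#|G|.-1 %/ 2).

Lemma order_G : #|G|.-1 = (2 * m)%N.
Proof.
have := oddG; rewrite -(prednK (prime_gt0 prG)) /= => /negbTE even_p1.
by rewrite divn2 mul2n -[in LHS](odd_double_half #|G|.-1) even_p1.
Qed.

Lemma half_order_gt0 : 0 < m.
Proof.
have := order_G; have := prime_gt1 prG; rewrite -subn1.
by move: oddG; case: #|G| => [|[|[|n]]] //=; lia.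
Qed.

Variable g : {perm gT}.
Hypothesis defAut : Aut G = <[g]>.

Lemma order_Aut_gen : #[g] = (2 * m)%N.
Proof.
by rewrite orderE -defAut card_Aut_cyclic ?prime_cyclic // totient_prime //; apply: order_G.
Qed.

Lemma inv_aut_gen : iota = g ^+ m.
Proof.
have order_gm : #[g ^+ m] = 2.
  by rewrite orderXdiv order_Aut_gen ?dvdn_mull // mulnK ?half_order_gt0.
have sub_iota : <[iota]> \subset Aut G by rewrite cycle_subG Aut_inv_aut.
have sub_gm : <[g ^+ m]> \subset Aut G by rewrite defAut cycle_subG mem_cycle.
have same : <[iota]> == <[g ^+ m]>.
  by rewrite (eq_subG_cyclic (Aut_prime_cyclic prG)) // -!orderE order_inv_aut order_gm.
have /cycleP[j] : iota \in <[g ^+ m]> by rewrite -(eqP same) cycle_id.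
rewrite -expg_mod_order order_gm; have : j %% 2 < 2 by rewrite ltn_mod.
case: (j %% 2) => [|[|//]] _; last by rewrite expg1.
by move=> iota1; have := order_inv_aut; rewrite iota1 expg0 order1.
Qed.

(* A Cayley set is fixed by g^i iff it is invariant under the cyclic group
   generated by g^gcd(i, m), which has order 2m/gcd(i, m). *)
Lemma card_fix_cayley_sets k i : 0 < k ->
  #|'Fix_(cayley_sets G k | 'P^*)[g ^+ i]| =
  binom_coef ((2 * m) %/ gcdn i m) (gcdn i m) k.
Proof.
move=> k_gt0; set d := gcdn i m.
have d_gt0 : 0 < d by rewrite gcdn_gt0 half_order_gt0 orbT.
have dvd_d : d %| 2 * m by rewrite dvdn_mull ?dvdn_gcdr.
have sKA : <[g ^+ d]> \subset Aut G by rewrite defAut cycle_subG mem_cycle.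
have -> : 'Fix_(cayley_sets G k | 'P^*)[g ^+ i] =
    [set S : {set gT} | [&& S \subset X, [acts <[g ^+ d]>, on S | 'P] & #|S| == k]].
  apply/setP => S; have fixS : (S \in afix 'P^* [set g ^+ i]) = (g ^+ i \in 'N(S | 'P)).
    by rewrite -astab1_set; apply/afix1P/astab1P.
  rewrite inE cayley_setsE // fixS [in RHS]inE inv_aut_gen cycle_subG.
  rewrite -(mem_expg_gcd ('N(S | 'P))%G g i half_order_gt0).
  by case: (S \subset X); case: (#|S| == k); rewrite /= ?andbT ?andbF.
pose K := <[g ^+ d]>%G.
have regK : {in X, forall x, 'C_K[x | 'P] = 1}.
  by move=> x Xx; apply/trivgP; rewrite -(Aut_semiregular Xx) setSI.
have actsKX := subset_trans sKA Aut_acts_nontrivial.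
rewrite (@card_invariant_subsets _ _ _ _ K _ (subsetT _) actsKX regK).
have cardX : #|X| = (2 * m)%N by rewrite -order_G [in RHS](cardsD1 1 G) group1.
rewrite -orderE orderXdiv order_Aut_gen // cardX.
suff -> : (2 * m) %/ ((2 * m) %/ d) = d by [].
by rewrite -{1}(divnK dvd_d) mulKn // divn_gt0 // dvdn_leq // muln_gt0 half_order_gt0.
Qed.

(* Burnside's lemma: averaging the fixed-point counts over Aut G = <[g]>. *)
Lemma a_w_burnside k : 0 < k ->
  (a_w G k * m =
   \sum_(d <- divisors m) totient (m %/ d) * binom_coef ((2 * m) %/ d) d k)%N.
Proof.
move=> k_gt0.
have orbitsE : a_w G k = #|orbit 'P^* (Aut G) @: cayley_sets G k| by [].
apply/eqP; rewrite -(eqn_pmul2l (isT : 0 < 2)) -sum_gcd_double ?half_order_gt0 //.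
rewrite mulnCA -{1}order_Aut_gen orderE -defAut orbitsE.
rewrite -Frobenius_Cauchy ?Aut_acts_cayley_sets //.
rewrite (eq_bigl (mem <[g]>)) => [|a]; last by rewrite /= defAut.
rewrite sum_cycle order_Aut_gen.
by apply/eqP/eq_bigr => i _; apply: card_fix_cayley_sets.
Qed.

End Automorphisms.

Close Scope group_scope.

Import GRing.Theory Num.Theory.
Local Open Scope ring_scope.

Lemma coef_binom_poly (R : nzRingType) e d k : (0 < e)%N ->
  ((1 + 'X^e) ^+ d - 1 : {poly R})`_k = if k == 0%N then 0 else (binom_coef e d k)%:R.
Proof.
move=> e_gt0; rewrite coefB coef1 (addrC 1 'X^e) exprD1n coef_sum.
have -> : \sum_(i < d.+1) (('X^e) ^+ i *+ 'C(d, i) : {poly R})`_k = (binom_coef e d k)%:R.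
  under eq_bigr do rewrite coefMn -exprM coefXn.
  rewrite /binom_coef; case: ifP => [/dvdnP[q ->{k}] | not_dvd]; last first.
    rewrite big1 // => i _; case: eqP => [def_k | _]; last by rewrite mul0rn.
    by move: not_dvd; rewrite def_k dvdn_mulr.
  rewrite mulnK // (eq_bigr (fun i : 'I_d.+1 => if i == q :> nat then ('C(d, i))%:R else 0)).
    rewrite -big_mkcond (big_ord1_eq _ (fun i => ('C(d, i))%:R)).
    by case: ltnP => // /bin_small ->.
  move=> i _; rewrite [(e * i)%N]mulnC eqn_pmul2r // eq_sym.
  by case: eqP; rewrite ?mulr1n ?mul0rn.
by case: k => [|k]; rewrite ?subr0 // /binom_coef dvdn0 div0n bin0 subrr.
Qed.

Lemma cayley_sets_large (gT : finGroupType) (A : {group gT}) k :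
  (#|A| <= k)%N -> cayley_sets A k = set0.
Proof.
move=> le_A_k; apply/setP => S; rewrite !inE.
apply/negP => /and5P[sSA S'1 _ _ /eqP cardS].
suff : (#|S| < #|A|)%N by rewrite cardS ltnNge le_A_k.
by apply: proper_card; rewrite properEneq sSA andbT; apply: contraNneq S'1 => ->.
Qed.

Lemma coef_Psi_w (gT : finGroupType) (A : {group gT}) k :
  (Psi_w A)`_k = if k == 0%N then 0 else (a_w A k)%:R.
Proof.
rewrite /Psi_w coef_sum (eq_bigr (fun j => if j == k then (a_w A j)%:R else 0)).
  rewrite -big_mkcond big_nat1_eq; case: k => [|k] //=; case: ltnP => // /cayley_sets_large.
  by rewrite /a_w => ->; rewrite imset0 cards0.
by move=> j _; rewrite coefZ coefXn eq_sym; case: eqP; rewrite ?mulr1 ?mulr0.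
Qed.

Lemma E_w_Psi_w (gT : finGroupType) (A : {group gT}) : (E_w A)%:R = (Psi_w A).[1] :> rat.
Proof.
rewrite /E_w /Psi_w horner_sum natr_sum; apply: eq_bigr => k _.
by rewrite hornerZ hornerXn expr1n mulr1.
Qed.

(* Psi^w for a group of odd prime order p, by comparing coefficients with
   the Burnside count a_w_burnside. *)
Theorem Psi_w_prime (gT : finGroupType) (G : {group gT}) : prime #|G| -> odd #|G| ->
  Psi_w G = (2%:R / (#|G|.-1)%:R) *:
    \sum_(d <- divisors (#|G|.-1 %/ 2))
      (totient (#|G|.-1 %/ (2 * d)))%:R *: ((1 + 'X^(#|G|.-1 %/ d)) ^+ d - 1).
Proof.
move=> prG oddG; have [g defAut] := cyclicP (Aut_prime_cyclic prG).
have m_gt0 := half_order_gt0 prG oddG; have burnside := a_w_burnside prG oddG defAut.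
set m := (#|G|.-1 %/ 2)%N in m_gt0 burnside *; rewrite (order_G prG oddG) -/m.
apply/polyP => k; rewrite coef_Psi_w coefZ coef_sum.
under eq_big_seq => d.
  rewrite -dvdn_divisors // => dvd_dm.
  have pos : (0 < (2 * m) %/ d)%N.
    by rewrite divn_gt0 ?(dvdn_gt0 m_gt0) //; have := dvdn_leq m_gt0 dvd_dm; lia.
  rewrite coefZ coef_binom_poly // divnMl //.
  over.
case: k => [|k] /=; first by rewrite big1 ?mulr0 // => d _; rewrite mulr0.
under eq_bigr do rewrite -natrM.
rewrite -natr_sum -burnside // natrM mulnC natrM.
have m_neq0 : (m%:R : rat) != 0 by rewrite pnatr_eq0 -lt0n.
by field.
Qed.

Theorem corollary5p1 (p : nat) (pr_p : prime p) (odd_p : odd p) :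
  Psi_w [set: 'Z_p]%G =
    (2%:R / (p.-1)%:R) *:
      \sum_(d <- divisors (p.-1 %/ 2))
        (totient (p.-1 %/ (2 * d)))%:R *: ((1 + 'X^(p.-1 %/ d)) ^+ d - 1)
  /\
  (E_w [set: 'Z_p]%G)%:R = (Psi_w [set: 'Z_p]%G).[1] /\
  ((E_w [set: 'Z_p]%G)%:R : rat) =
    (2%:R / (p.-1)%:R) *
      \sum_(d <- divisors (p.-1 %/ 2))
        (totient (p.-1 %/ (2 * d)))%:R * (2 ^+ d - 1).
Proof.
have cardZ : #|[set: 'Z_p]%G| = p by rewrite /= cardsT card_ord Zp_cast // prime_gt1.
have prZ : prime #|[set: 'Z_p]%G| by rewrite cardZ.
have oddZ : odd #|[set: 'Z_p]%G| by rewrite cardZ.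
have Psi_Zp := Psi_w_prime prZ oddZ; rewrite cardZ in Psi_Zp.
split=> //; split; first exact: E_w_Psi_w.
rewrite E_w_Psi_w Psi_Zp hornerZ horner_sum; congr (_ * _); apply: eq_bigr => d _.
by rewrite hornerZ !hornerE expr1n.
Qed.
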